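(* Let $A$ be a semiprime $2$-torsion free associative algebra and $Q$ a subalgebra of $Q_s(A)$ containing $A$. Let $q\in Q$ and suppose there is an essential ideal $I$ of $A$ with $qI+Iq\subseteq A$ and $[q,[I,I]]=0$. Then $[q,I]=0$.
   Context: Algebras are over a commutative unital ring $\Phi$. $[x,y]=xy-yx$ and $[X,Y]$ is the span of $[x,y]$, $x\in X,y\in Y$. $A$ is $2$-torsion free if $2x=0\Rightarrow x=0$. An ideal is essential if it has nonzero intersection with every nonzero ideal. $Q_s(A)$ is the Martindale symmetric algebra of quotients of the semiprime algebra $A$: the elements $q$ of the maximal left quotient algebra $Q^l_{\max}(A)$ for which some essential ideal $I$ of $A$ satisfies $Iq+qI\subseteq A$. *)

From HB Require Import structures.
From mathcomp Require Import all_boot all_order all_algebra.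
Set Implicit Arguments. Unset Strict Implicit. Unset Printing Implicit Defensive.
Import GRing.Theory.
Local Open Scope ring_scope.

(* Conventions: Phi is the commutative unital base ring; S is a (unital)
   Phi-algebra playing the role of the Martindale symmetric algebra of
   quotients Q_s(A).  The (possibly non-unital) algebra A and the
   subalgebra Q are subsets of S given as Prop-valued predicates. *)

Section Defs.
Variables (Phi : comPzRingType) (S : algType Phi).

Definition commutator (x y : S) : S := x * y - y * x.

Definition is_subalgebra (P : S -> Prop) : Prop :=
  [/\ P 0,
      (forall x y, P x -> P y -> P (x - y)),
      (forall x y, P x -> P y -> P (x * y)) &
      (forall (a : Phi) x, P x -> P (a *: x))].

Definition is_ideal (A I : S -> Prop) : Prop :=
  [/\ (forall x, I x -> A x),
      I 0,
      (forall x y, I x -> I y -> I (x - y)),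
      (forall (a : Phi) x, I x -> I (a *: x)) &
      (forall a x, A a -> I x -> I (a * x) /\ I (x * a))].

Definition essential_ideal (A I : S -> Prop) : Prop :=
  is_ideal A I /\
  forall J, is_ideal A J -> (exists x, J x /\ x <> 0) ->
    exists x, I x /\ J x /\ x <> 0.

Definition semiprime (A : S -> Prop) : Prop :=
  forall J, is_ideal A J -> (forall x y, J x -> J y -> x * y = 0) ->
    forall x, J x -> x = 0.

Definition two_torsion_free (A : S -> Prop) : Prop :=
  forall x, A x -> x *+ 2 = 0 -> x = 0.

(* Abstract characterization of (a ring isomorphic to a subring of) the
   Martindale symmetric algebra of quotients Q_s(A) containing A:
   every q has an essential ideal I of A with Iq + qI contained in A, and
   no nonzero q is annihilated (on either side) by an essential ideal. *)
Definition symmetric_quotient_algebra (A : S -> Prop) : Prop :=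
  [/\ (forall q : S, exists I, essential_ideal A I /\
          forall x, I x -> A (x * q) /\ A (q * x)),
      (forall (q : S) I, essential_ideal A I ->
          (forall x, I x -> q * x = 0) -> q = 0) &
      (forall (q : S) I, essential_ideal A I ->
          (forall x, I x -> x * q = 0) -> q = 0)].

End Defs.

From HB Require Import structures.
From mathcomp Require Import all_boot all_order all_algebra.
Set Implicit Arguments. Unset Strict Implicit. Unset Printing Implicit Defensive.
Import GRing.Theory.
Local Open Scope ring_scope.

(* Put v = [q, x] for x in I.  Expanding [q, [x, x c]] = 0 gives v [x, c] = 0,
   and replacing c by y w gives v I [x, I] = 0.  Taking w = z q z' in I and
   using that q commutes with [I, I] leaves v I I v I = 0.  Hence every
   u = y z v z' with y, z, z' in I satisfies u A u = 0, so u = 0 by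
   semiprimeness; as no nonzero element of Q_s(A) is annihilated by an
   essential ideal, v = 0. *)

Section Commutator.
Variables (Phi : comPzRingType) (S : algType Phi).
Implicit Types x y z : S.

Lemma commutatorxx x : commutator x x = 0.
Proof. exact: subrr. Qed.

Lemma opp_commutator x y : - commutator x y = commutator y x.
Proof. exact: opprB. Qed.

Lemma commutator_mulr x y z :
  commutator x (y * z) = commutator x y * z + y * commutator x z.
Proof. by rewrite /commutator mulrBl mulrBr !mulrA addrA subrK. Qed.

Lemma commutator_eq0 x y : commutator x y = 0 -> x * y = y * x.
Proof. exact: subr0_eq. Qed.

End Commutator.

Section Semiprime.
Variables (Phi : comPzRingType) (S : algType Phi) (A : S -> Prop).
Hypothesis hA : is_subalgebra A.

Definition lann (X : S -> Prop) (x : S) : Prop :=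
  A x /\ forall y, X y -> x * y = 0.

Definition rann (X : S -> Prop) (y : S) : Prop :=
  A y /\ forall x, X x -> x * y = 0.

Lemma is_ideal_lann X :
  (forall a y, A a -> X y -> X (a * y)) -> is_ideal A (lann X).
Proof.
have [A0 AB AM AZ] := hA; move=> XmulA.
split=> [x [] // | | x x' [Ax xX] [Ax' x'X] | c x [Ax xX] | a x Aa [Ax xX]].
- by split=> // y _; rewrite mul0r.
- by split=> [|y Xy]; [apply: AB | rewrite mulrBl xX ?x'X ?subr0].
- by split=> [|y Xy]; [apply: AZ | rewrite -scalerAl xX ?scaler0].
- split; (split=> [|y Xy]; first exact: AM).
  + by rewrite -mulrA xX ?mulr0.
  + by rewrite -mulrA xX //; apply: XmulA.
Qed.

Lemma is_ideal_rann J : is_ideal A J -> is_ideal A (rann J).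
Proof.
have [A0 AB AM AZ] := hA; case=> _ _ _ _ JmulA.
split=> [y [] // | | y y' [Ay Jy] [Ay' Jy'] | c y [Ay Jy] | a y Aa [Ay Jy]].
- by split=> // x _; rewrite mulr0.
- by split=> [|x Jx]; [apply: AB | rewrite mulrBr Jy ?Jy' ?subr0].
- by split=> [|x Jx]; [apply: AZ | rewrite -scalerAr Jy ?scaler0].
- split; (split=> [|x Jx]; first exact: AM).
  + by rewrite mulrA Jy //; case: (JmulA a x Aa Jx).
  + by rewrite mulrA Jy ?mul0r.
Qed.

Lemma is_idealI J K :
  is_ideal A J -> is_ideal A K -> is_ideal A (fun x => J x /\ K x).
Proof.
case=> JA J0 JB JZ JM [KA K0 KB KZ KM].
split=> [x [/JA] // | // | x y [Jx Kx] [Jy Ky] | c x [Jx Kx] | a x Aa [Jx Kx]].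
- by split; [apply: JB | apply: KB].
- by split; [apply: JZ | apply: KZ].
- by have [Jax Jxa] := JM a x Aa Jx; have [Kax Kxa] := KM a x Aa Kx.
Qed.

Hypothesis hsemi : semiprime A.

Lemma semiprime_annihilating_ideals_meet0 J K :
  is_ideal A J -> is_ideal A K -> (forall x y, J x -> K y -> x * y = 0) ->
  forall x, J x -> K x -> x = 0.
Proof.
move=> idJ idK JK0 x Jx Kx.
apply: (hsemi (is_idealI idJ idK)) (conj Jx Kx) => y z [Jy _] [_ Kz].
exact: JK0.
Qed.

(* The annihilator L of u and of A u is an ideal, u lies in L and in the
   annihilator of L, and these two ideals multiply to zero. *)
Lemma semiprime_square_sandwich0 u :
  A u -> u * u = 0 -> (forall a, A a -> u * a * u = 0) -> u = 0.
Proof.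
have [_ _ AM _] := hA; move=> Au uu uAu.
pose X y := y = u \/ exists2 a, A a & y = a * u.
have XmulA a y : A a -> X y -> X (a * y).
  move=> Aa [-> | [b Ab ->]]; right; first by exists a.
  by exists (a * b); [apply: AM | rewrite mulrA].
have idL := is_ideal_lann XmulA.
apply: (semiprime_annihilating_ideals_meet0 idL (is_ideal_rann idL)).
- by move=> x y Lx [_ ->].
- by split=> // y [-> // | [a Aa ->]]; rewrite mulrA uAu.
- by split=> // x [_]; apply; left.
Qed.

Lemma semiprime_sandwich0 u : A u -> (forall a, A a -> u * a * u = 0) -> u = 0.
Proof.
have [_ _ AM _] := hA; move=> Au uAu.
apply: semiprime_square_sandwich0 => //.
have uu_sandwich a : A a -> u * u * a * (u * u) = 0.
  by move=> Aa; rewrite !mulrA -(mulrA u u a) -(mulrA u (u * a)) (uAu a) // mulr0 mul0r.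
apply: (semiprime_square_sandwich0 _ _ uu_sandwich); first exact: AM.
by rewrite mulrA (uAu u) // mul0r.
Qed.

End Semiprime.

Lemma essential_ideal_annihilator0 (Phi : comPzRingType) (S : algType Phi)
    (A I : S -> Prop) (p : S) :
  symmetric_quotient_algebra A -> essential_ideal A I ->
  (forall y z z', I y -> I z -> I z' -> y * z * p * z' = 0) -> p = 0.
Proof.
case=> _ lann0 rann0 hI Ip0.
apply: (rann0 _ I hI) => z Iz; apply: (rann0 _ I hI) => y Iy.
by apply: (lann0 _ I hI) => z' Iz'; rewrite !mulrA Ip0.
Qed.

Section CommutatorWithIdeal.
Variables (Phi : comPzRingType) (S : algType Phi) (A I : S -> Prop) (q : S).
Hypotheses (hA : is_subalgebra A) (hI : is_ideal A I).
Hypothesis hqI : forall x, I x -> A (q * x) /\ A (x * q).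
Hypothesis hcomm : forall x y, I x -> I y -> commutator q (commutator x y) = 0.
Variable x : S.
Hypothesis Ix : I x.

Local Notation v := (commutator q x).

Let I_mul y z : I y -> I z -> I (y * z).
Proof. by case: hI => IA _ _ _ IM Iy Iz; case: (IM y z (IA y Iy) Iz). Qed.

Lemma commutator_mul_commutator0 c : I c -> v * commutator x c = 0.
Proof.
move=> Ic; have := hcomm Ix (I_mul Ix Ic).
rewrite commutator_mulr commutatorxx mul0r add0r commutator_mulr hcomm //.
by rewrite mulr0 addr0.
Qed.

Lemma commutator_mul_ideal_commutator0 y w :
  I y -> I w -> v * y * commutator x w = 0.
Proof.
move=> Iy Iw; have := commutator_mul_commutator0 (I_mul Iy Iw).
by rewrite commutator_mulr mulrDr mulrA commutator_mul_commutator0 // !mul0r add0r mulrA.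
Qed.

Lemma commutator_ideal_sandwich0 y z z' :
  I y -> I z -> I z' -> v * y * z * v * z' = 0.
Proof.
move=> Iy Iz Iz'.
have Izqz' : I (z * q * z').
  by case: hI => _ _ _ _ IM; case: (IM _ z' (hqI Iz).2 Iz').
have q_comm : q * commutator x z' = commutator x z' * q.
  exact/commutator_eq0/hcomm.
have expand : commutator x (z * q * z') =
    commutator x z * q * z' - z * v * z' + z * commutator x z' * q.
  by rewrite !commutator_mulr -(opp_commutator q x) -mulrA q_comm mulrDl mulrN mulNr !mulrA.
have := commutator_mul_ideal_commutator0 Iy Izqz'.
have -> : v * y * commutator x (z * q * z') = v * y * commutator x z * q * z'
    - v * y * z * v * z' + v * (y * z) * commutator x z' * q.
  by rewrite expand mulrDr mulrBr !mulrA.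
have Iyz := I_mul Iy Iz.
rewrite !commutator_mul_ideal_commutator0 // !mul0r sub0r addr0.
by move/eqP; rewrite oppr_eq0 => /eqP.
Qed.

Hypothesis hsemi : semiprime A.

Lemma ideal_commutator_sandwich0 y z z' :
  I y -> I z -> I z' -> y * z * v * z' = 0.
Proof.
have [_ AB AM _] := hA; have [IA _ _ _ IM] := hI.
move=> Iy Iz Iz'; apply: (semiprime_sandwich0 hA hsemi).
  have Av : A v by have [Aqx Axq] := hqI Ix; apply: AB.
  by apply/AM/IA/Iz'; apply/AM/Av; apply/AM; apply/IA.
move=> a Aa; have Iz'ay := I_mul (IM a z' Aa Iz').2 Iy.
have -> : y * z * v * z' * a * (y * z * v * z') =
          y * z * (v * (z' * a * y) * z * v * z') by rewrite !mulrA.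
by rewrite commutator_ideal_sandwich0 ?mulr0.
Qed.

End CommutatorWithIdeal.

Theorem mainTheorem5 (Phi : comPzRingType) (S : algType Phi)
  (A Q : S -> Prop)
  (hA : is_subalgebra A)
  (hsemi : semiprime A)
  (h2 : two_torsion_free A)
  (hS : symmetric_quotient_algebra A)
  (hQ : is_subalgebra Q)
  (hAQ : forall x, A x -> Q x)
  (q : S) (hq : Q q)
  (I : S -> Prop) (hI : essential_ideal A I)
  (hqI : forall x, I x -> A (q * x) /\ A (x * q))
  (hcomm : forall x y, I x -> I y -> commutator q (commutator x y) = 0) :
  forall x, I x -> commutator q x = 0.
Proof.
move=> x Ix; apply: (essential_ideal_annihilator0 hS hI) => y z z' Iy Iz Iz'.
exact: (ideal_commutator_sandwich0 hA hI.1 hqI hcomm Ix hsemi).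
Qed.
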